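(* Let $\mathbf{Y}\in\mathbb{R}_{\ge0}^{n\times m}$, $\mathbf{u}\in\mathbb{R}^n$, $\mathbf{X}\in\mathbb{R}_{>0}^{p\times m}$ and $\boldsymbol{\beta}\in\mathbb{R}_{>0}^p$. Consider $F(\mathbf{X}):=\tfrac12\|\mathbf{u}-\mathbf{Y}\mathbf{X}^\intercal\boldsymbol{\beta}\|^2$ as a function of $\mathbf{X}$ ($\boldsymbol{\beta}$ fixed) and $G(\boldsymbol{\beta}):=\tfrac12\|\mathbf{u}-\mathbf{Y}\mathbf{X}^\intercal\boldsymbol{\beta}\|^2$ as a function of $\boldsymbol{\beta}$ ($\mathbf{X}$ fixed). Then $$Q_F(\mathbf{X},\mathbf{A}):=\frac12\sum_{i=1}^n\frac{1}{(\mathbf{Y}\mathbf{A}^\intercal\boldsymbol{\beta})_i}\sum_{j=1}^m\sum_{k=1}^pY_{ij}A_{kj}\beta_k\Big(u_i-\frac{X_{kj}}{A_{kj}}(\mathbf{Y}\mathbf{A}^\intercal\boldsymbol{\beta})_i\Big)^2,$$ $$Q_G(\boldsymbol{\beta},\mathbf{a}):=\frac12\sum_{i=1}^n\frac{1}{(\mathbf{Y}\mathbf{X}^\intercal\mathbf{a})_i}\sum_{k=1}^p(\mathbf{Y}\mathbf{X}^\intercal)_{ik}a_k\Big(u_i-\frac{\beta_k}{a_k}(\mathbf{Y}\mathbf{X}^\intercal\mathbf{a})_i\Big)^2$$ define separable and convex surrogate functionals for $F$ and $G$, respectively.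
   Context: The auxiliary arguments $\mathbf{A}\in\mathbb{R}_{>0}^{p\times m}$ and $\mathbf{a}\in\mathbb{R}_{>0}^p$ have strictly positive entries, and all denominators are assumed nonzero. A map $Q_F$ is a surrogate functional for $F$ if $Q_F(\mathbf{x},\mathbf{a})\ge F(\mathbf{x})$ for all $\mathbf{x},\mathbf{a}$ and $Q_F(\mathbf{x},\mathbf{x})=F(\mathbf{x})$ for all $\mathbf{x}$. A surrogate is separable if $Q_F(\mathbf{x},\mathbf{a})=\sum_i g_i(x_i,\mathbf{a})$ for some functions $g_i$ (matrix entries playing the role of coordinates). Convexity refers to the first argument. *)

From HB Require Import structures.
From mathcomp Require Import all_boot all_order all_algebra.
Set Implicit Arguments. Unset Strict Implicit. Unset Printing Implicit Defensive.
Import Order.TTheory GRing.Theory Num.Theory.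
Local Open Scope ring_scope.

Section Defs.
Variable R : realFieldType.

Definition posmx (a b : nat) (M : 'M[R]_(a, b)) : Prop := forall i j, 0 < M i j.
Definition nnegmx (a b : nat) (M : 'M[R]_(a, b)) : Prop := forall i j, 0 <= M i j.

Definition lsq (n m p : nat) (u : 'cV[R]_n) (Y : 'M[R]_(n, m))
    (X : 'M[R]_(p, m)) (beta : 'cV[R]_p) : R :=
  2^-1 * \sum_(i < n) (u i 0 - (Y *m X^T *m beta) i 0) ^+ 2.

Definition QF (n m p : nat) (u : 'cV[R]_n) (Y : 'M[R]_(n, m)) (beta : 'cV[R]_p)
    (X A : 'M[R]_(p, m)) : R :=
  2^-1 * \sum_(i < n) ((Y *m A^T *m beta) i 0)^-1 *
    \sum_(j < m) \sum_(k < p)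
      Y i j * A k j * beta k 0 *
      (u i 0 - X k j / A k j * (Y *m A^T *m beta) i 0) ^+ 2.

Definition QG (n m p : nat) (u : 'cV[R]_n) (Y : 'M[R]_(n, m)) (X : 'M[R]_(p, m))
    (b a : 'cV[R]_p) : R :=
  2^-1 * \sum_(i < n) ((Y *m X^T *m a) i 0)^-1 *
    \sum_(k < p)
      (Y *m X^T) i k * a k 0 *
      (u i 0 - b k 0 / a k 0 * (Y *m X^T *m a) i 0) ^+ 2.

Definition surrogate (T : Type) (D : T -> Prop) (F : T -> R) (Q : T -> T -> R)
  : Prop :=
  (forall x a, D x -> D a -> F x <= Q x a) /\ (forall x, D x -> Q x x = F x).

Definition separable (a b : nat) (D : 'M[R]_(a, b) -> Prop)
    (Q : 'M[R]_(a, b) -> 'M[R]_(a, b) -> R) : Prop :=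
  exists g : 'I_a -> 'I_b -> R -> 'M[R]_(a, b) -> R,
    forall x y, D x -> D y -> Q x y = \sum_(k < a) \sum_(j < b) g k j (x k j) y.

Definition convex_first (a b : nat) (D : 'M[R]_(a, b) -> Prop)
    (Q : 'M[R]_(a, b) -> 'M[R]_(a, b) -> R) : Prop :=
  forall x1 x2 y t, D x1 -> D x2 -> D y -> 0 <= t -> t <= 1 ->
    Q (t *: x1 + (1 - t) *: x2) y <= t * Q x1 y + (1 - t) * Q x2 y.

End Defs.

(* Both objectives have the form x |-> 1/2 sum_i (u_i - <w_i, x>)^2 with
   nonnegative weights w_i: for F the coordinates are the entries X_kj with
   weights Y_ij beta_k, for G they are the beta_k with weights (Y X^T)_ik.
   For a > 0 and d_i = <w_i, a>, the identity
     u_i - <w_i, x> = sum_k (w_ik a_k / d_i) (u_i - x_k / a_k * d_i)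
   writes the residual as a convex combination, so Jensen's inequality for
   the square bounds its square by the corresponding weighted average, with
   equality at x = a.  The majorant is a sum over k of convex quadratics in
   the single coordinate x_k. *)

From HB Require Import structures.
From mathcomp Require Import all_boot all_order all_algebra.
From mathcomp Require Import ring.
Set Implicit Arguments. Unset Strict Implicit. Unset Printing Implicit Defensive.
Import Order.TTheory GRing.Theory Num.Theory.
Local Open Scope ring_scope.

Section WeightedSquares.
Variables (R : realFieldType) (K : finType).

Lemma sqr_wsum_le (c z : K -> R) : (forall k, 0 <= c k) ->
  (\sum_k c k * z k) ^+ 2 <= (\sum_k c k) * \sum_k c k * z k ^+ 2.
Proof.
move=> c_ge0; set S := \sum_k c k; set P := \sum_k c k * z k.
set Q := \sum_k c k * z k ^+ 2.
have [S0 | S_neq0] := eqVneq S 0.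
  have c0 k : c k = 0 by apply: (psumr_eq0P (fun l _ => c_ge0 l) S0).
  by rewrite /P big1 ?expr0n ?S0 ?mul0r // => k _; rewrite c0 mul0r.
have S_gt0 : 0 < S by rewrite lt0r S_neq0 sumr_ge0.
have var_eq : \sum_k c k * (S * z k - P) ^+ 2 = S * (S * Q - P ^+ 2).
  rewrite (eq_bigr (fun k => S ^+ 2 * (c k * z k ^+ 2)
    - 2 * S * P * (c k * z k) + P ^+ 2 * c k)); last by move=> k _; ring.
  by rewrite big_split sumrB /= -!mulr_sumr -/S -/P -/Q; ring.
have : 0 <= S * (S * Q - P ^+ 2).
  by rewrite -var_eq sumr_ge0 // => k _; rewrite mulr_ge0 ?sqr_ge0.
by rewrite pmulr_rge0 // subr_ge0.
Qed.

Lemma sqr_subr_wsum_le (c x a : K -> R) (v : R) :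
  (forall k, 0 <= c k) -> (forall k, 0 < a k) -> 0 < \sum_k c k * a k ->
  (v - \sum_k c k * x k) ^+ 2 <=
  (\sum_k c k * a k)^-1 *
    \sum_k c k * a k * (v - x k / a k * \sum_k c k * a k) ^+ 2.
Proof.
move=> c_ge0 a_gt0 d_gt0; set d := \sum_k c k * a k.
have avg : \sum_k c k * a k * (v - x k / a k * d) = d * (v - \sum_k c k * x k).
  rewrite (eq_bigr (fun k => v * (c k * a k) - d * (c k * x k))); last first.
    by move=> k _; field; rewrite gt_eqF.
  by rewrite sumrB -!mulr_sumr mulrBr mulrC.
have := @sqr_wsum_le (fun k => c k * a k) (fun k => v - x k / a k * d)
  (fun k => mulr_ge0 (c_ge0 k) (ltW (a_gt0 k))).
rewrite /= avg exprMn -/d ler_pdivlMl // => jensen.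
by rewrite -(ler_pM2l d_gt0) mulrA -expr2.
Qed.

Lemma wsum_majorant_id (c a : K -> R) (v : R) :
  (forall k, a k != 0) -> \sum_k c k * a k != 0 ->
  (\sum_k c k * a k)^-1 *
    \sum_k c k * a k * (v - a k / a k * \sum_k c k * a k) ^+ 2
  = (v - \sum_k c k * a k) ^+ 2.
Proof.
move=> a_neq0; set d := \sum_k c k * a k => d_neq0.
under eq_bigr => k _ do rewrite divff // mul1r.
by rewrite -mulr_suml mulKf.
Qed.

End WeightedSquares.

Definition convex_fun (R : realFieldType) (f : R -> R) : Prop :=
  forall s1 s2 t, 0 <= t <= 1 -> f (t * s1 + (1 - t) * s2) <= t * f s1 + (1 - t) * f s2.

Lemma convex_fun_sqr_affine (R : realFieldType) (c b v : R) :
  0 <= c -> convex_fun (fun s => c * (v - s * b) ^+ 2).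
Proof.
move=> c_ge0 s1 s2 t /andP[t_ge0 t_le1]; rewrite -subr_ge0.
have -> : t * (c * (v - s1 * b) ^+ 2) + (1 - t) * (c * (v - s2 * b) ^+ 2)
    - c * (v - (t * s1 + (1 - t) * s2) * b) ^+ 2
    = c * (t * (1 - t)) * (b * (s1 - s2)) ^+ 2 by ring.
by rewrite mulr_ge0 ?sqr_ge0 // mulr_ge0 // mulr_ge0 // subr_ge0.
Qed.

Lemma convex_fun_sum (R : realFieldType) (I : finType) (f : I -> R -> R) :
  (forall i, convex_fun (f i)) -> convex_fun (fun s => \sum_i f i s).
Proof.
move=> f_cvx s1 s2 t t01; rewrite !mulr_sumr -big_split ler_sum // => i _.
exact: f_cvx.
Qed.

Section MajorizationSurrogate.
Variables (R : realFieldType) (I K : finType) (w : I -> K -> R) (u : I -> R).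
Hypothesis w_ge0 : forall i k, 0 <= w i k.

Definition fit (x : K -> R) (i : I) : R := \sum_k w i k * x k.

Definition lsq_fun (x : K -> R) : R := 2^-1 * \sum_i (u i - fit x i) ^+ 2.

Definition surr_fun (x a : K -> R) : R :=
  2^-1 * \sum_i (fit a i)^-1 *
    \sum_k w i k * a k * (u i - x k / a k * fit a i) ^+ 2.

Definition surr_coord (k : K) (s : R) (a : K -> R) : R :=
  \sum_i 2^-1 * (w i k * a k / fit a i) * (u i - s * (fit a i / a k)) ^+ 2.

Lemma surr_funE x a : surr_fun x a = \sum_k surr_coord k (x k) a.
Proof.
rewrite /surr_fun mulr_sumr /surr_coord exchange_big; apply: eq_bigr => i _.
by rewrite mulrA mulr_sumr; apply: eq_bigr => k _; ring.
Qed.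

Lemma fit_ge0 a : (forall k, 0 <= a k) -> forall i, 0 <= fit a i.
Proof. by move=> a_ge0 i; rewrite sumr_ge0 // => k _; rewrite mulr_ge0. Qed.

Lemma lsq_le_surr x a : (forall k, 0 < a k) -> (forall i, 0 < fit a i) ->
  lsq_fun x <= surr_fun x a.
Proof.
move=> a_gt0 fit_gt0; apply: ler_wpM2l; first by rewrite invr_ge0 ler0n.
by apply: ler_sum => i _; apply: sqr_subr_wsum_le (w_ge0 i) a_gt0 (fit_gt0 i).
Qed.

Lemma surr_fun_id a : (forall k, a k != 0) -> (forall i, fit a i != 0) ->
  surr_fun a a = lsq_fun a.
Proof.
move=> a_neq0 fit_neq0; congr (_ * _); apply: eq_bigr => i _.
exact: wsum_majorant_id a_neq0 (fit_neq0 i).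
Qed.

Lemma surr_coord_convex k a : (forall k, 0 <= a k) -> convex_fun (surr_coord k ^~ a).
Proof.
move=> a_ge0; apply: convex_fun_sum => i; apply: convex_fun_sqr_affine.
by rewrite !mulr_ge0 ?invr_ge0 ?ler0n ?fit_ge0.
Qed.

End MajorizationSurrogate.

Section MatrixSurrogate.
Variables (R : realFieldType) (I : finType) (p q : nat).

Definition entries (x : 'M[R]_(p, q)) (l : 'I_p * 'I_q) : R := x l.1 l.2.

Variables (w : I -> 'I_p * 'I_q -> R) (u : I -> R).
Variables (F : 'M[R]_(p, q) -> R) (Q : 'M[R]_(p, q) -> 'M[R]_(p, q) -> R).
Hypothesis w_ge0 : forall i l, 0 <= w i l.
Hypothesis fit_neq0 : forall a, posmx a -> forall i, fit w (entries a) i != 0.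
Hypothesis FE : forall x, F x = lsq_fun w u (entries x).
Hypothesis QE : forall x a, Q x a = surr_fun w u (entries x) (entries a).

Lemma surrogate_entries : surrogate (@posmx R p q) F Q.
Proof.
have fit_gt0 a : posmx a -> forall i, 0 < fit w (entries a) i.
  by move=> a_gt0 i; rewrite lt0r fit_neq0 // fit_ge0 // => l; apply/ltW/a_gt0.
split=> [x a _ a_gt0 | x x_gt0]; rewrite FE QE.
  by apply: lsq_le_surr => // [l|]; [apply: a_gt0 | apply: fit_gt0].
by apply: surr_fun_id => [l|]; [rewrite gt_eqF ?x_gt0 | apply: fit_neq0].
Qed.

Lemma separable_entries : separable (@posmx R p q) Q.
Proof.
exists (fun k j s a => surr_coord w u (k, j) s (entries a)) => x a _ _.
by rewrite QE surr_funE [RHS]pair_bigA; apply: eq_bigr => -[k j].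
Qed.

Lemma convex_first_entries : convex_first (@posmx R p q) Q.
Proof.
move=> x1 x2 a t _ _ a_gt0 t_ge0 t_le1; rewrite !QE !surr_funE !mulr_sumr -big_split.
apply: ler_sum => l _; rewrite /entries !mxE.
apply: surr_coord_convex => [//|k|]; first exact: ltW (a_gt0 _ _).
by rewrite t_ge0 t_le1.
Qed.

End MatrixSurrogate.

Lemma sum_pair_ord1 (V : nmodType) (p : nat) (F : 'I_p * 'I_1 -> V) :
  \sum_l F l = \sum_k F (k, ord0).
Proof.
rewrite (eq_bigr (fun l => F (l.1, l.2))) => [|[] //].
by rewrite -(pair_bigA _ (fun k j => F (k, j))); apply: eq_bigr => k _; rewrite big_ord1.
Qed.

Section LeastSquaresInstances.
Variables (R : realFieldType) (n m p : nat) (Y : 'M[R]_(n, m)) (u : 'cV[R]_n).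

Definition coefF (beta : 'cV[R]_p) (i : 'I_n) (l : 'I_p * 'I_m) : R :=
  Y i l.2 * beta l.1 0.

Definition coefG (X : 'M[R]_(p, m)) (i : 'I_n) (l : 'I_p * 'I_1) : R :=
  (Y *m X^T) i l.1.

Lemma coefF_ge0 beta : nnegmx Y -> nnegmx beta -> forall i l, 0 <= coefF beta i l.
Proof. by move=> Y_ge0 beta_ge0 i l; rewrite mulr_ge0. Qed.

Lemma coefG_ge0 X : nnegmx Y -> nnegmx X -> forall i l, 0 <= coefG X i l.
Proof.
move=> Y_ge0 X_ge0 i l; rewrite /coefG mxE sumr_ge0 // => j _.
by rewrite mxE mulr_ge0.
Qed.

Lemma fit_coefF beta A i : (Y *m A^T *m beta) i 0 = fit (coefF beta) (entries A) i.
Proof.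
rewrite mxE; under eq_bigr => k _ do rewrite mxE mulr_suml.
by rewrite pair_bigA; apply: eq_bigr => l _; rewrite mxE /coefF /entries; ring.
Qed.

Lemma fit_coefG X a i : (Y *m X^T *m a) i 0 = fit (coefG X) (entries a) i.
Proof. by rewrite mxE /fit sum_pair_ord1. Qed.

Lemma lsq_coefF beta X : lsq u Y X beta = lsq_fun (coefF beta) (u^~ 0) (entries X).
Proof. by congr (_ * _); apply: eq_bigr => i _; rewrite fit_coefF. Qed.

Lemma lsq_coefG X b : lsq u Y X b = lsq_fun (coefG X) (u^~ 0) (entries b).
Proof. by congr (_ * _); apply: eq_bigr => i _; rewrite fit_coefG. Qed.

Lemma QF_coefF beta X A :
  QF u Y beta X A = surr_fun (coefF beta) (u^~ 0) (entries X) (entries A).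
Proof.
congr (_ * _); apply: eq_bigr => i _.
rewrite fit_coefF exchange_big pair_bigA; congr (_ * _); apply: eq_bigr => l _.
by rewrite /coefF /entries; ring.
Qed.

Lemma QG_coefG X b a :
  QG u Y X b a = surr_fun (coefG X) (u^~ 0) (entries b) (entries a).
Proof.
congr (_ * _); apply: eq_bigr => i _.
by rewrite fit_coefG sum_pair_ord1.
Qed.

End LeastSquaresInstances.

Theorem theorem6 (R : realFieldType) (n m p : nat)
    (Y : 'M[R]_(n, m)) (u : 'cV[R]_n) (X : 'M[R]_(p, m)) (beta : 'cV[R]_p)
    (hY : nnegmx Y) (hX : posmx X) (hbeta : posmx beta)
    (hdenF : forall A : 'M[R]_(p, m), posmx A ->
               forall i : 'I_n, (Y *m A^T *m beta) i 0 != 0)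
    (hdenG : forall a : 'cV[R]_p, posmx a ->
               forall i : 'I_n, (Y *m X^T *m a) i 0 != 0) :
  (surrogate (@posmx R p m) (fun X' => lsq u Y X' beta) (QF u Y beta)
   /\ separable (@posmx R p m) (QF u Y beta)
   /\ convex_first (@posmx R p m) (QF u Y beta))
  /\
  (surrogate (@posmx R p 1) (fun b => lsq u Y X b) (QG u Y X)
   /\ separable (@posmx R p 1) (QG u Y X)
   /\ convex_first (@posmx R p 1) (QG u Y X)).
Proof.
have wF_ge0 := coefF_ge0 hY (fun k j => ltW (hbeta k j)).
have wG_ge0 := coefG_ge0 hY (fun k j => ltW (hX k j)).
have fitF_neq0 A : posmx A -> forall i, fit (coefF Y beta) (entries A) i != 0.
  by move=> A_gt0 i; rewrite -fit_coefF hdenF.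
have fitG_neq0 a : posmx a -> forall i, fit (coefG Y X) (entries a) i != 0.
  by move=> a_gt0 i; rewrite -fit_coefG hdenG.
split; (split; [|split]).
- exact: surrogate_entries wF_ge0 fitF_neq0 (lsq_coefF Y u beta) (QF_coefF Y u beta).
- exact: separable_entries (QF_coefF Y u beta).
- exact: convex_first_entries wF_ge0 (QF_coefF Y u beta).
- exact: surrogate_entries wG_ge0 fitG_neq0 (lsq_coefG Y u X) (QG_coefG Y u X).
- exact: separable_entries (QG_coefG Y u X).
- exact: convex_first_entries wG_ge0 (QG_coefG Y u X).
Qed.
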